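(* Let $G$ be a Hausdorff topological group and $H$ an extremely amenable closed subgroup of $G$ of finite index. Then $H$ is a normal clopen subgroup of $G$, and $M(G)$ is isomorphic (as a $G$-flow) to the action of $G$ on $G/H$ by left multiplication.
   Context: A $G$-flow is a continuous action of $G$ on a compact Hausdorff space; $M(G)$ denotes the universal minimal $G$-flow (the minimal $G$-flow admitting a continuous $G$-equivariant map onto every minimal $G$-flow, unique up to isomorphism). A topological group $H$ is extremely amenable if every $H$-flow has a fixed point (equivalently $|M(H)|=1$). *)

From Stdlib Require Import List Classical ProofIrrelevance.
Import ListNotations.
Set Implicit Arguments.

Definition is_topology (X : Type) (op : (X -> Prop) -> Prop) : Prop :=
  op (fun _ => True) /\
  (forall U V, op U -> op V -> op (fun x => U x /\ V x)) /\
  (forall F : (X -> Prop) -> Prop, (forall U, F U -> op U) ->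
     op (fun x => exists U, F U /\ U x)).

Definition is_closed (X : Type) (op : (X -> Prop) -> Prop) (C : X -> Prop) : Prop :=
  op (fun x => ~ C x).

Definition hausdorff (X : Type) (op : (X -> Prop) -> Prop) : Prop :=
  forall x y : X, x <> y -> exists U V, op U /\ op V /\ U x /\ V y /\
     (forall z, U z -> V z -> False).

Definition compact (X : Type) (op : (X -> Prop) -> Prop) : Prop :=
  forall F : (X -> Prop) -> Prop, (forall U, F U -> op U) ->
    (forall x, exists U, F U /\ U x) ->
    exists l : list (X -> Prop), (forall U, In U l -> F U) /\
      (forall x, exists U, In U l /\ U x).

Definition continuous (X Y : Type) (opX : (X -> Prop) -> Prop)
  (opY : (Y -> Prop) -> Prop) (f : X -> Y) : Prop :=
  forall U, opY U -> opX (fun x => U (f x)).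

Record TopGroup := {
  tg_carrier :> Type;
  tg_open : (tg_carrier -> Prop) -> Prop;
  tg_mul : tg_carrier -> tg_carrier -> tg_carrier;
  tg_inv : tg_carrier -> tg_carrier;
  tg_one : tg_carrier;
  tg_topology : is_topology tg_open;
  tg_mulA : forall a b c, tg_mul a (tg_mul b c) = tg_mul (tg_mul a b) c;
  tg_mul1g : forall a, tg_mul tg_one a = a;
  tg_mulg1 : forall a, tg_mul a tg_one = a;
  tg_mulVg : forall a, tg_mul (tg_inv a) a = tg_one;
  tg_mulgV : forall a, tg_mul a (tg_inv a) = tg_one;
  tg_mul_cont : forall x y U, tg_open U -> U (tg_mul x y) ->
     exists V W, tg_open V /\ tg_open W /\ V x /\ W y /\
       (forall a b, V a -> W b -> U (tg_mul a b));
  tg_inv_cont : forall x U, tg_open U -> U (tg_inv x) ->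
     exists V, tg_open V /\ V x /\ (forall a, V a -> U (tg_inv a))
}.

Arguments tg_open {_}.
Arguments tg_mul {_}.
Arguments tg_inv {_}.
Arguments tg_one {_}.

Definition is_subgroup (G : TopGroup) (H : G -> Prop) : Prop :=
  H tg_one /\ (forall a b, H a -> H b -> H (tg_mul a b)) /\
  (forall a, H a -> H (tg_inv a)).

Definition normal_subgroup (G : TopGroup) (H : G -> Prop) : Prop :=
  forall g h, H h -> H (tg_mul (tg_mul g h) (tg_inv g)).

Definition finite_index (G : TopGroup) (H : G -> Prop) : Prop :=
  exists l : list G, forall g, exists a, In a l /\ H (tg_mul (tg_inv a) g).

Section Sub.
Variables (G : TopGroup) (H : G -> Prop) (HH : is_subgroup G H).

Definition sub_carrier := {g : G | H g}.

Definition sub_open (V : sub_carrier -> Prop) : Prop :=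
  exists U, tg_open U /\ forall x, V x <-> U (proj1_sig x).

Definition sub_mul (x y : sub_carrier) : sub_carrier :=
  exist _ (tg_mul (proj1_sig x) (proj1_sig y))
    (proj1 (proj2 HH) _ _ (proj2_sig x) (proj2_sig y)).
Definition sub_inv (x : sub_carrier) : sub_carrier :=
  exist _ (tg_inv (proj1_sig x)) (proj2 (proj2 HH) _ (proj2_sig x)).
Definition sub_one : sub_carrier := exist _ tg_one (proj1 HH).

Lemma sub_eq (x y : sub_carrier) : proj1_sig x = proj1_sig y -> x = y.
Proof.
  destruct x as [x px], y as [y py]; simpl; intros e; subst y.
  rewrite (proof_irrelevance _ px py); reflexivity.
Qed.

Lemma sub_topology : is_topology sub_open.
Proof.
  destruct (tg_topology G) as [Tfull [Tint Tuni]].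
  split; [|split].
  - exists (fun _ => True); split; [exact Tfull| tauto].
  - intros V W [U1 [o1 e1]] [U2 [o2 e2]].
    exists (fun x => U1 x /\ U2 x); split; [now apply Tint|].
    intros x; rewrite e1, e2; tauto.
  - intros F hF.
    exists (fun g => exists U', (exists V, F V /\ tg_open U' /\
                 forall x, V x <-> U' (proj1_sig x)) /\ U' g).
    split.
    + apply Tuni. intros U' [V [_ [o _]]]; exact o.
    + intros x; split.
      * intros [V [FV Vx]]. destruct (hF V FV) as [U' [o e]].
        exists U'; split; [exists V; auto| now apply e].
      * intros [U' [[V [FV [o e]]] Ux]]. exists V; split; auto; now apply e.
Qed.

Definition subTopGroup : TopGroup.
Proof.
  refine {| tg_carrier := sub_carrier; tg_open := sub_open;
            tg_mul := sub_mul; tg_inv := sub_inv; tg_one := sub_one;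
            tg_topology := sub_topology |}.
  - intros; apply sub_eq; simpl; apply tg_mulA.
  - intros; apply sub_eq; simpl; apply tg_mul1g.
  - intros; apply sub_eq; simpl; apply tg_mulg1.
  - intros; apply sub_eq; simpl; apply tg_mulVg.
  - intros; apply sub_eq; simpl; apply tg_mulgV.
  - intros x y V [U [o e]] Vxy. apply e in Vxy. simpl in Vxy.
    destruct (tg_mul_cont G _ _ _ o Vxy) as [V1 [W1 [o1 [o2 [h1 [h2 h]]]]]].
    exists (fun a : sub_carrier => V1 (proj1_sig a)),
           (fun a : sub_carrier => W1 (proj1_sig a)).
    split; [exists V1; split; [exact o1| tauto]|].
    split; [exists W1; split; [exact o2| tauto]|].
    split; [exact h1|]; split; [exact h2|].
    intros a b ha hb; apply e; simpl; now apply h.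
  - intros x V [U [o e]] Vx. apply e in Vx. simpl in Vx.
    destruct (tg_inv_cont G _ _ o Vx) as [V1 [o1 [h1 h]]].
    exists (fun a : sub_carrier => V1 (proj1_sig a)).
    split; [exists V1; split; [exact o1| tauto]|].
    split; [exact h1|]. intros a ha; apply e; simpl; now apply h.
Defined.

End Sub.

Definition is_flow (G : TopGroup) (X : Type) (opX : (X -> Prop) -> Prop)
  (act : G -> X -> X) : Prop :=
  is_topology opX /\ compact opX /\ hausdorff opX /\
  (forall x, act tg_one x = x) /\
  (forall g h x, act (tg_mul g h) x = act g (act h x)) /\
  (forall g x U, opX U -> U (act g x) ->
     exists V W, tg_open V /\ opX W /\ V g /\ W x /\
       (forall a b, V a -> W b -> U (act a b))).

Definition minimal_flow (G : TopGroup) (X : Type) (opX : (X -> Prop) -> Prop)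
  (act : G -> X -> X) : Prop :=
  is_flow G opX act /\ inhabited X /\
  (forall C : X -> Prop, is_closed opX C -> (exists x, C x) ->
     (forall g x, C x -> C (act g x)) -> forall x, C x).

Definition flow_map (G : TopGroup) (X Y : Type) (opX : (X -> Prop) -> Prop)
  (actX : G -> X -> X) (opY : (Y -> Prop) -> Prop) (actY : G -> Y -> Y)
  (f : X -> Y) : Prop :=
  continuous opX opY f /\ forall g x, f (actX g x) = actY g (f x).

Definition universal_minimal_flow (G : TopGroup) (X : Type)
  (opX : (X -> Prop) -> Prop) (actX : G -> X -> X) : Prop :=
  minimal_flow G opX actX /\
  forall (Y : Type) (opY : (Y -> Prop) -> Prop) (actY : G -> Y -> Y),
    minimal_flow G opY actY ->
    exists f : X -> Y, flow_map G opX actX opY actY f /\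
      (forall y, exists x, f x = y).

Definition flow_iso (G : TopGroup) (X Y : Type) (opX : (X -> Prop) -> Prop)
  (actX : G -> X -> X) (opY : (Y -> Prop) -> Prop) (actY : G -> Y -> Y) : Prop :=
  exists (f : X -> Y) (f' : Y -> X),
    flow_map G opX actX opY actY f /\ continuous opY opX f' /\
    (forall x, f' (f x) = x) /\ (forall y, f (f' y) = y).

Definition extremely_amenable (G : TopGroup) : Prop :=
  forall (X : Type) (opX : (X -> Prop) -> Prop) (act : G -> X -> X),
    is_flow G opX act -> inhabited X -> exists x, forall g, act g x = x.

Section Cosets.
Variables (G : TopGroup) (H : G -> Prop).

(* a left coset aH, represented as a subset of G *)
Definition coset_space :=
  {S : G -> Prop | exists a : G, forall y, S y <-> H (tg_mul (tg_inv a) y)}.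

Definition coset_of (g : G) : coset_space :=
  exist _ (fun y => H (tg_mul (tg_inv g) y)) (ex_intro _ g (fun y => iff_refl _)).

Definition coset_open (U : coset_space -> Prop) : Prop :=
  tg_open (fun g => U (coset_of g)).

Lemma inv_mul (a b : G) : tg_inv (tg_mul a b) = tg_mul (tg_inv b) (tg_inv a).
Proof.
  assert (E : tg_mul (tg_mul a b) (tg_mul (tg_inv b) (tg_inv a)) = tg_one).
  { rewrite tg_mulA, <- (tg_mulA _ a b), tg_mulgV, tg_mulg1, tg_mulgV. reflexivity. }
  rewrite <- (tg_mul1g G (tg_mul (tg_inv b) (tg_inv a))).
  rewrite <- (tg_mulVg G (tg_mul a b)), <- tg_mulA, E, tg_mulg1. reflexivity.
Qed.

Definition coset_act (g : G) (S : coset_space) : coset_space.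
Proof.
  refine (exist _ (fun y => proj1_sig S (tg_mul (tg_inv g) y)) _).
  destruct (proj2_sig S) as [a Ha].
  exists (tg_mul g a). intros y. rewrite Ha, inv_mul, tg_mulA. reflexivity.
Defined.

End Cosets.

From Stdlib Require Import List Classical ClassicalEpsilon FunctionalExtensionality PropExtensionality ProofIrrelevance.
Import ListNotations.
Set Implicit Arguments.

(* A closed subgroup H of finite index is open: its complement is the finite
   union of the closed cosets aH with a outside H.  Hence the quotient topology
   on G/H is discrete, and G/H is a finite set.  The whole argument then lives
   in the world of discrete finite flows: a finite discrete G-space is a G-flow
   as soon as the action is locally constant in the group variable, and every
   invariant subset of such a flow is again one.
   1. G/H is a minimal G-flow (the action is transitive).
   2. H is normal: the H-orbit of a coset bH is a finite H-flow, so by extreme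
      amenability it has a fixed point hbH, which forces b^-1 H b to lie in H.
   3. G/H is universal: a fixed point y0 of H in a minimal G-flow Y gives the
      equivariant map gH |-> g.y0, whose image is finite, hence closed and so
      all of Y.
   4. Any universal minimal flow M is isomorphic to G/H: composing the maps
      M -> G/H -> M given by universality with the roles exchanged yields an
      endomorphism gH |-> gtH of G/H, which is bijective because H is normal. *)

Lemma op_ext (X : Type) (op : (X -> Prop) -> Prop) (U V : X -> Prop) :
  op U -> (forall x, U x <-> V x) -> op V.
Proof.
  intros o e. replace V with U; auto.
  apply functional_extensionality; intros x; apply propositional_extensionality; auto.
Qed.

Lemma sig_eq (A : Type) (P : A -> Prop) (x y : sig P) :
  proj1_sig x = proj1_sig y -> x = y.
Proof.
  destruct x as [x px], y as [y py]; simpl; intros e; subst y.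
  rewrite (proof_irrelevance _ px py); reflexivity.
Qed.

Section GroupLaws.
Variable G : TopGroup.
Implicit Types a b : G.

Lemma mulgK a b : tg_mul (tg_mul b a) (tg_inv a) = b.
Proof. rewrite <- tg_mulA, tg_mulgV, tg_mulg1; reflexivity. Qed.

Lemma mulgVK a b : tg_mul (tg_mul b (tg_inv a)) a = b.
Proof. rewrite <- tg_mulA, tg_mulVg, tg_mulg1; reflexivity. Qed.

Lemma invK a : tg_inv (tg_inv a) = a.
Proof.
  rewrite <- (tg_mulg1 G (tg_inv (tg_inv a))), <- (tg_mulVg G a), tg_mulA,
    tg_mulVg, tg_mul1g; reflexivity.
Qed.
End GroupLaws.

Ltac gsimpl := repeat first [ rewrite inv_mul | rewrite invK | rewrite tg_mulA
  | rewrite tg_mulgV | rewrite tg_mulVg | rewrite tg_mul1g | rewrite tg_mulg1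
  | rewrite mulgK | rewrite mulgVK ].

Lemma left_open (G : TopGroup) (c : G) (U : G -> Prop) :
  tg_open U -> tg_open (fun g => U (tg_mul c g)).
Proof.
  intros o. destruct (tg_topology G) as [_ [_ Tuni]].
  set (F := fun W : G -> Prop => tg_open W /\ forall b, W b -> U (tg_mul c b)).
  eapply op_ext; [apply (Tuni F); intros W [h _]; exact h|].
  intros g; simpl; split.
  - intros [W [[_ h] Wg]]; auto.
  - intros Ug. destruct (tg_mul_cont G _ _ _ o Ug) as [V [W [_ [oW [Vc [Wg h]]]]]].
    exists W; split; [split; auto|auto].
Qed.

Lemma right_open (G : TopGroup) (c : G) (U : G -> Prop) :
  tg_open U -> tg_open (fun g => U (tg_mul g c)).
Proof.
  intros o. destruct (tg_topology G) as [_ [_ Tuni]].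
  set (F := fun W : G -> Prop => tg_open W /\ forall b, W b -> U (tg_mul b c)).
  eapply op_ext; [apply (Tuni F); intros W [h _]; exact h|].
  intros g; simpl; split.
  - intros [W [[_ h] Wg]]; auto.
  - intros Ug. destruct (tg_mul_cont G _ _ _ o Ug) as [V [W [oV [_ [Vg [Wc h]]]]]].
    exists V; split; [split; auto|auto].
Qed.

Lemma finite_inter (X A : Type) (op : (X -> Prop) -> Prop) (T : is_topology op)
  (l : list A) (P : A -> X -> Prop) :
  (forall a, In a l -> op (P a)) -> op (fun x => forall a, In a l -> P a x).
Proof.
  destruct T as [Tf [Ti _]].
  induction l as [|a l IH]; intros h.
  - eapply op_ext; [exact Tf|]. simpl; tauto.
  - eapply op_ext.
    + apply (Ti (P a) (fun x => forall b, In b l -> P b x));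
        [apply h; simpl; auto | apply IH; intros; apply h; simpl; auto].
    + intros x; simpl; split.
      * intros [h1 h2] b [<-|hb]; auto.
      * intros h1; split; auto.
Qed.

Lemma point_compl_open (X : Type) (op : (X -> Prop) -> Prop) (T : is_topology op)
  (Hs : hausdorff op) (p : X) : op (fun z => p <> z).
Proof.
  destruct T as [_ [_ Tuni]].
  set (F := fun U : X -> Prop => op U /\ forall z, U z -> p <> z).
  eapply op_ext; [apply (Tuni F); intros W [h _]; exact h|].
  intros z; simpl; split.
  - intros [W [[_ h] Wz]]; auto.
  - intros nz. destruct (Hs p z nz) as [U [V [oU [oV [Up [Vz d]]]]]].
    exists V; split; [split; auto|auto].
    intros w Vw e; subst w; exact (d p Up Vw).
Qed.

Lemma finite_set_closed (X A : Type) (op : (X -> Prop) -> Prop) (T : is_topology op)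
  (Hs : hausdorff op) (l : list A) (p : A -> X) :
  is_closed op (fun x => exists a, In a l /\ p a = x).
Proof.
  unfold is_closed. eapply op_ext.
  - apply (finite_inter T l (fun a z => p a <> z)).
    intros a _; apply point_compl_open; auto.
  - intros x; split.
    + intros h [a [ia e]]. exact (h a ia e).
    + intros h a ia e. apply h; eauto.
Qed.

(* X is finite: covered by finitely many subsingletons (no decidable equality
   is needed for this formulation). *)
Definition finite (X : Type) : Prop :=
  exists L : list (X -> Prop),
    (forall S, In S L -> forall x y, S x -> S y -> x = y) /\
    (forall x, exists S, In S L /\ S x).

Lemma finite_compact (X : Type) (op : (X -> Prop) -> Prop) :
  finite X -> compact op.
Proof.
  intros [L [hs hL]] F _ hcov.
  assert (sub : exists l, (forall U, In U l -> F U) /\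
     (forall x, (exists S, In S L /\ S x) -> exists U, In U l /\ U x)).
  { clear hL. induction L as [|S L IH].
    - exists []; split; [simpl; tauto|]. intros x [S [[] _]].
    - destruct IH as [l [h1 h2]]; [intros; eapply hs; eauto; simpl; auto|].
      destruct (classic (exists x, S x)) as [[x0 Sx0]|nS].
      + destruct (hcov x0) as [U [FU Ux0]].
        exists (U :: l); split; [intros V [<-|hV]; auto|].
        intros x [S' [[<-|hS'] S'x]].
        * exists U; split; [simpl; auto|].
          rewrite (hs S (or_introl eq_refl) x x0); auto.
        * destruct (h2 x) as [V [hV Vx]]; eauto. exists V; simpl; auto.
      + exists l; split; auto.
        intros x [S' [[<-|hS'] S'x]]; [exfalso; eauto | eauto]. }
  destruct sub as [l [h1 h2]]. exists l; split; auto.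
Qed.

Lemma compact_discrete_finite (X : Type) (op : (X -> Prop) -> Prop) :
  compact op -> (forall U, op U) -> finite X.
Proof.
  intros C disc.
  destruct (C (fun U => exists x, U = (fun z => z = x))) as [l [hl cov]].
  - intros U _; apply disc.
  - intros x. exists (fun z => z = x); eauto.
  - exists l; split; auto.
    intros S hS x y Sx Sy. destruct (hl S hS) as [z ->]. congruence.
Qed.

Lemma finite_injective (X Y : Type) (f : X -> Y) :
  (forall x y, f x = f y -> x = y) -> finite Y -> finite X.
Proof.
  intros inj [L [hs hL]].
  exists (map (fun S x => S (f x)) L); split.
  - intros S' hS' x y Sx Sy. apply in_map_iff in hS'.
    destruct hS' as [S [<- iS]]. apply inj; eapply hs; eauto.
  - intros x. destruct (hL (f x)) as [S [iS Sx]].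
    exists (fun x => S (f x)); split; auto. apply in_map_iff; eauto.
Qed.

Section DiscreteFlows.
Variables (G : TopGroup) (X : Type) (opX : (X -> Prop) -> Prop) (act : G -> X -> X).
Hypothesis discrete : forall U, opX U.

(* On a discrete space, continuity of the action means that each orbit map
   g |-> g.x is locally constant. *)
Definition locally_constant_orbits : Prop :=
  forall g x, exists V, tg_open V /\ V g /\ forall a, V a -> act a x = act g x.

Lemma discrete_flow :
  finite X -> (forall x, act tg_one x = x) ->
  (forall g h x, act (tg_mul g h) x = act g (act h x)) ->
  locally_constant_orbits -> is_flow G opX act.
Proof.
  intros fin a1 aM lc.
  split; [|split; [|split; [|split; [|split]]]]; auto.
  - split; [|split]; intros; apply discrete.
  - apply finite_compact; exact fin.
  - intros x y nxy. exists (fun z => z = x), (fun z => z = y).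
    repeat split; auto. intros z -> ->; auto.
  - intros g x U _ Ux. destruct (lc g x) as [V [oV [Vg hV]]].
    exists V, (fun z => z = x); repeat split; auto.
    intros a b Va ->; rewrite hV; auto.
Qed.

Lemma flow_locally_constant : is_flow G opX act -> locally_constant_orbits.
Proof.
  intros [_ [_ [_ [_ [_ ac]]]]] g x.
  destruct (ac g x (fun z => z = act g x) (discrete _) eq_refl)
    as [V [W [oV [_ [Vg [Wx h]]]]]].
  exists V; repeat split; auto.
Qed.

End DiscreteFlows.

Section InvariantSubflow.
Variables (G : TopGroup) (X : Type) (opX : (X -> Prop) -> Prop) (act : G -> X -> X).
Hypothesis discrete : forall U, opX U.
Variable P : X -> Prop.
Hypothesis P_inv : forall g x, P x -> P (act g x).

Definition sub_act (g : G) (x : {x | P x}) : {x | P x} :=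
  exist _ (act g (proj1_sig x)) (P_inv g (proj2_sig x)).

Lemma invariant_subflow :
  is_flow G opX act -> is_flow G (fun _ : {x | P x} -> Prop => True) sub_act.
Proof.
  intros fl. pose proof (flow_locally_constant discrete fl) as lc.
  destruct fl as [_ [C [_ [a1 [aM _]]]]].
  apply discrete_flow; auto.
  - apply (finite_injective (@proj1_sig _ P)); [apply sig_eq|].
    exact (compact_discrete_finite C discrete).
  - intros x; apply sig_eq; apply a1.
  - intros g h x; apply sig_eq; apply aM.
  - intros g x. destruct (lc g (proj1_sig x)) as [V [oV [Vg hV]]].
    exists V; repeat split; auto. intros a Va; apply sig_eq; simpl; auto.
Qed.
End InvariantSubflow.

Lemma flow_restrict (G : TopGroup) (H : G -> Prop) (HH : is_subgroup G H)
  (Y : Type) (opY : (Y -> Prop) -> Prop) (act : G -> Y -> Y) :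
  is_flow G opY act -> is_flow (subTopGroup HH) opY (fun x y => act (proj1_sig x) y).
Proof.
  intros [T [C [Hs [a1 [aM ac]]]]].
  split; [auto|split; [auto|split; [auto|split; [|split]]]].
  - intros x; apply a1.
  - intros g h x; apply aM.
  - intros g x U oU Ux. destruct (ac _ _ _ oU Ux) as [V [W [oV [oW [Vg [Wx h]]]]]].
    exists (fun a : sub_carrier G H => V (proj1_sig a)), W.
    split; [exists V; split; [auto| tauto]|].
    repeat split; auto.
Qed.

(* If f : X -> Y and p : Y -> X are maps with p onto and f o p bijective, then f
   is a bijection with inverse p o (f o p)^-1; when Y is discrete this inverse is
   continuous, so an equivariant f is an isomorphism of flows. *)
Lemma flow_iso_of_section (G : TopGroup) (X Y : Type) (opX : (X -> Prop) -> Prop)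
  (actX : G -> X -> X) (opY : (Y -> Prop) -> Prop) (actY : G -> Y -> Y)
  (f : X -> Y) (p : Y -> X) :
  flow_map G opX actX opY actY f -> (forall U, opY U) ->
  (forall x, exists y, p y = x) ->
  (forall y1 y2, f (p y1) = f (p y2) -> y1 = y2) ->
  (forall y, exists y', f (p y') = y) ->
  flow_iso G opX actX opY actY.
Proof.
  intros fm disc p_onto inj surj.
  set (psi_inv := fun y => proj1_sig (constructive_indefinite_description _ (surj y))).
  assert (psi_invK : forall y, f (p (psi_inv y)) = y).
  { intros y; unfold psi_inv; destruct (constructive_indefinite_description _ _); auto. }
  exists f, (fun y => p (psi_inv y)). split; [exact fm|split; [|split]].
  - intros U _; apply disc.
  - intros x. destruct (p_onto x) as [y <-]. f_equal. apply inj. rewrite psi_invK; reflexivity.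
  - exact psi_invK.
Qed.

Section Cosets.
Variables (G : TopGroup) (H : G -> Prop) (HH : is_subgroup G H).

Let H1 : H tg_one := proj1 HH.
Let HM : forall a b, H a -> H b -> H (tg_mul a b) := proj1 (proj2 HH).
Let HV : forall a, H a -> H (tg_inv a) := proj2 (proj2 HH).

Notation cop := (@coset_open G H).
Notation cact := (@coset_act G H).
Notation cos := (coset_of G H).

Lemma coset_of_eq (x y : G) : cos x = cos y <-> H (tg_mul (tg_inv x) y).
Proof.
  split.
  - intros e. apply (f_equal (fun S => proj1_sig S y)) in e. simpl in e.
    rewrite e, tg_mulVg; exact H1.
  - intros h. apply sig_eq; simpl. apply functional_extensionality; intros z.
    apply propositional_extensionality; split; intros hz.
    + replace (tg_mul (tg_inv y) z)
        with (tg_mul (tg_inv (tg_mul (tg_inv x) y)) (tg_mul (tg_inv x) z))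
        by (gsimpl; reflexivity). auto.
    + replace (tg_mul (tg_inv x) z) with (tg_mul (tg_mul (tg_inv x) y) (tg_mul (tg_inv y) z))
        by (gsimpl; reflexivity). auto.
Qed.

Definition rep (S : coset_space G H) : G :=
  proj1_sig (constructive_indefinite_description _ (proj2_sig S)).

Lemma coset_rep (S : coset_space G H) : S = cos (rep S).
Proof.
  apply sig_eq; simpl. apply functional_extensionality; intros z.
  apply propositional_extensionality. unfold rep.
  destruct (constructive_indefinite_description _ _) as [a ha]; simpl; auto.
Qed.

Lemma coset_act_of (a c : G) : cact a (cos c) = cos (tg_mul a c).
Proof.
  apply sig_eq; simpl. apply functional_extensionality; intros z.
  rewrite inv_mul, tg_mulA; reflexivity.
Qed.

Lemma coset_act1 (S : coset_space G H) : cact tg_one S = S.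
Proof. rewrite (coset_rep S), coset_act_of, tg_mul1g; reflexivity. Qed.

Lemma coset_actM (g h : G) (S : coset_space G H) : cact (tg_mul g h) S = cact g (cact h S).
Proof. rewrite (coset_rep S), !coset_act_of, tg_mulA; reflexivity. Qed.

(* A closed subgroup of finite index is open: H is the intersection of the
   complements of the cosets aH not containing 1. *)
Lemma closed_finite_index_open :
  is_closed (@tg_open G) H -> finite_index G H -> tg_open H.
Proof.
  intros hc [l hl].
  eapply op_ext.
  - apply (finite_inter (tg_topology G) l (fun a g => ~ H a -> ~ H (tg_mul (tg_inv a) g))).
    intros a _. destruct (classic (H a)) as [ha|na].
    + eapply op_ext; [apply (proj1 (tg_topology G))|]. simpl; tauto.
    + eapply op_ext; [apply (left_open G (tg_inv a) _ hc)|]. simpl; tauto.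
  - intros g; split.
    + intros h. apply NNPP; intros ng. destruct (hl g) as [a [ia ha]].
      apply (h a ia); auto. intros Ha. apply ng.
      replace g with (tg_mul a (tg_mul (tg_inv a) g)) by (gsimpl; reflexivity). auto.
    + intros hg a _ na ha. apply na.
      replace a with (tg_mul g (tg_inv (tg_mul (tg_inv a) g))) by (gsimpl; reflexivity). auto.
Qed.

Lemma coset_space_finite : finite_index G H -> finite (coset_space G H).
Proof.
  intros [l hl]. exists (map (fun a S => S = cos a) l); split.
  - intros S hS x y. apply in_map_iff in hS. destruct hS as [a [<- _]]. congruence.
  - intros S. destruct (hl (rep S)) as [a [ia ha]].
    exists (fun S => S = cos a); split; [apply in_map_iff; eauto|].
    rewrite (coset_rep S). symmetry; apply coset_of_eq; auto.
Qed.

(* When H is normal, every G-equivariant self-map of G/H is right multiplication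
   gH |-> gtH by some t, hence bijective. *)
Lemma coset_endomorphism_bijective (psi : coset_space G H -> coset_space G H) :
  normal_subgroup G H -> (forall g S, psi (cact g S) = cact g (psi S)) ->
  (forall S1 S2, psi S1 = psi S2 -> S1 = S2) /\ (forall S, exists T, psi T = S).
Proof.
  intros Hnorm psi_eq. set (t := rep (psi (cos tg_one))).
  assert (psi_of : forall c, psi (cos c) = cos (tg_mul c t)).
  { intros c. replace (cos c) with (cact c (cos tg_one))
      by (rewrite coset_act_of, tg_mulg1; reflexivity).
    rewrite psi_eq. unfold t. rewrite (coset_rep (psi (cos tg_one))) at 1.
    rewrite coset_act_of; reflexivity. }
  split.
  - intros S1 S2 e. rewrite (coset_rep S1), (coset_rep S2), !psi_of in *.
    apply coset_of_eq in e. apply coset_of_eq.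
    apply (Hnorm t) in e. revert e. gsimpl. auto.
  - intros S. exists (cos (tg_mul (rep S) (tg_inv t))).
    rewrite psi_of, mulgVK, <- coset_rep; reflexivity.
Qed.

Hypothesis Hopen : tg_open H.

Lemma coset_discrete (U : coset_space G H -> Prop) : cop U.
Proof.
  unfold coset_open. destruct (tg_topology G) as [_ [_ Tuni]].
  set (F := fun W : G -> Prop =>
    exists a, U (cos a) /\ W = (fun g => H (tg_mul (tg_inv a) g))).
  eapply op_ext; [apply (Tuni F); intros W [a [_ ->]]; apply left_open; auto|].
  intros g; split.
  - intros [W [[a [Ua ->]] Wg]]. rewrite <- (proj2 (coset_of_eq _ _) Wg); auto.
  - intros Ug. exists (fun y => H (tg_mul (tg_inv g) y)); split.
    + exists g; auto.
    + rewrite tg_mulVg; auto.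
Qed.

(* The orbit maps of G/H are locally constant: a c H = g c H on the open set gcHc^-1. *)
Lemma coset_locally_constant : locally_constant_orbits G cact.
Proof.
  intros g x. set (c := rep x).
  exists (fun a => H (tg_mul (tg_inv (tg_mul g c)) (tg_mul a c))); repeat split.
  - apply (right_open G c (fun y => H (tg_mul (tg_inv (tg_mul g c)) y))), left_open; auto.
  - rewrite tg_mulVg; auto.
  - intros a ha. unfold c; rewrite (coset_rep x), !coset_act_of.
    symmetry; apply coset_of_eq; auto.
Qed.

Hypothesis Hfin : finite_index G H.

Lemma coset_flow : is_flow G cop cact.
Proof.
  apply discrete_flow; auto using coset_discrete, coset_space_finite,
    coset_act1, coset_actM, coset_locally_constant.
Qed.

(* G acts transitively on G/H, hence minimally. *)
Lemma coset_minimal : minimal_flow G cop cact.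
Proof.
  split; [exact coset_flow|split; [constructor; exact (cos tg_one)|]].
  intros C _ [x0 Cx0] inv x.
  specialize (inv (tg_mul (rep x) (tg_inv (rep x0))) x0 Cx0).
  rewrite (coset_rep x0) in inv at 2. rewrite coset_act_of, mulgVK in inv.
  rewrite (coset_rep x); exact inv.
Qed.

Hypothesis EA : extremely_amenable (subTopGroup HH).

(* The H-orbit of bH is a finite H-flow; its H-fixed point hbH shows
   b^-1 k b in H for every k in H. *)
Lemma conj_in_subgroup (b k : G) : H k -> H (tg_mul (tg_mul (tg_inv b) k) b).
Proof.
  intros hk.
  set (P := fun S => exists h, H h /\ S = cos (tg_mul h b)).
  set (actH := fun (x : subTopGroup HH) S => cact (proj1_sig x) S).
  assert (P_inv : forall x S, P S -> P (actH x S)).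
  { intros [x hx] S [h [hh ->]]. exists (tg_mul x h); split; auto.
    unfold actH; simpl; rewrite coset_act_of, tg_mulA; reflexivity. }
  assert (orbit_flow := @invariant_subflow _ _ _ actH coset_discrete P P_inv
    (flow_restrict HH coset_flow)).
  destruct (EA orbit_flow) as [[S [h0 [hh0 e0]]] fix0].
  { constructor. exists (cos b). exists tg_one; split; auto. rewrite tg_mul1g; auto. }
  assert (hx : H (tg_mul (tg_mul h0 k) (tg_inv h0))) by auto.
  specialize (fix0 (exist _ _ hx)).
  apply (f_equal (@proj1_sig _ _)) in fix0. simpl in fix0. unfold actH in fix0.
  simpl in fix0. rewrite e0, coset_act_of in fix0. symmetry in fix0.
  apply coset_of_eq in fix0. revert fix0. gsimpl. auto.
Qed.

Lemma coset_normal : normal_subgroup G H.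
Proof.
  intros g h hh. pose proof (conj_in_subgroup (tg_inv g) hh) as e.
  rewrite invK in e. exact e.
Qed.

(* Universality: a fixed point y0 of H in a minimal flow Y yields the
   equivariant map gH |-> g.y0, onto since its image is finite hence closed. *)
Lemma coset_universal : universal_minimal_flow G cop cact.
Proof.
  split; [exact coset_minimal|].
  intros Y opY actY [fl [[y1] mn]].
  destruct (EA (flow_restrict HH fl) (inhabits y1)) as [y0 fix0].
  destruct fl as [T [_ [Hs [a1 [aM ac]]]]].
  set (f := fun S => actY (rep S) y0).
  assert (fof : forall c, f (cos c) = actY c y0).
  { intros c. unfold f. set (b := rep (cos c)).
    assert (hbc : H (tg_mul (tg_inv b) c))
      by (apply coset_of_eq; unfold b; rewrite <- coset_rep; reflexivity).
    replace c with (tg_mul b (tg_mul (tg_inv b) c)) by (gsimpl; reflexivity).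
    rewrite aM. f_equal. symmetry. exact (fix0 (exist _ _ hbc)). }
  exists f. split; [split|].
  - intros U _; apply coset_discrete.
  - intros g S. rewrite (coset_rep S), coset_act_of, !fof, aM; reflexivity.
  - destruct Hfin as [l hl].
    assert (image : forall y, (exists S, f S = y) <->
                              exists a, In a l /\ actY a y0 = y).
    { intros y; split.
      - intros [S <-]. destruct (hl (rep S)) as [a [ia ha]]. exists a; split; auto.
        rewrite <- fof, (coset_rep S). f_equal. apply coset_of_eq; auto.
      - intros [a [_ <-]]. exists (cos a); auto. }
    intros y. apply image. apply (mn (fun y => exists a, In a l /\ actY a y0 = y)).
    + exact (finite_set_closed T Hs l (fun a => actY a y0)).
    + destruct (hl tg_one) as [a [ia _]]. exists (actY a y0), a; auto.
    + intros g x [a [ia <-]]. apply image.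
      exists (cos (tg_mul g a)). rewrite fof, aM; reflexivity.
Qed.

(* Any universal minimal flow M is isomorphic to G/H: with f : M -> G/H and
   p : G/H -> M given by universality, f o p is a bijective endomorphism. *)
Lemma coset_unique (M : Type) (opM : (M -> Prop) -> Prop) (actM : G -> M -> M) :
  universal_minimal_flow G opM actM -> flow_iso G opM actM cop cact.
Proof.
  intros [mM uM].
  destruct (uM _ _ _ coset_minimal) as [f [fm f_onto]].
  destruct (proj2 coset_universal _ _ _ mM) as [p [[_ p_eq] p_onto]].
  destruct (@coset_endomorphism_bijective (fun S => f (p S)) coset_normal)
    as [inj surj].
  { intros g S. rewrite p_eq, (proj2 fm); reflexivity. }
  exact (@flow_iso_of_section _ _ _ _ _ _ _ f p fm coset_discrete p_onto inj surj).
Qed.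

End Cosets.

Theorem mainTheorem6 (G : TopGroup) (H : G -> Prop) (HH : is_subgroup G H) :
  hausdorff (@tg_open G) ->
  is_closed (@tg_open G) H ->
  finite_index G H ->
  extremely_amenable (@subTopGroup G H HH) ->
  normal_subgroup G H /\ tg_open H /\ is_closed (@tg_open G) H /\
  universal_minimal_flow G (@coset_open G H) (@coset_act G H) /\
  (forall (M : Type) (opM : (M -> Prop) -> Prop) (actM : G -> M -> M),
     universal_minimal_flow G opM actM ->
     flow_iso G opM actM (@coset_open G H) (@coset_act G H)).
Proof.
  intros _ H_closed H_fin EA.
  assert (H_open : tg_open H) by exact (closed_finite_index_open HH H_closed H_fin).
  split; [|split; [exact H_open|split; [exact H_closed|split]]].
  - exact (coset_normal H_open H_fin EA).
  - exact (coset_universal H_open H_fin EA).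
  - intros M opM actM U. exact (coset_unique H_open H_fin EA U).
Qed.
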